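(* Let $(X,d)$ be a metric space, $\mu$ a non-atomic Borel measure on $X$, $m$ a Borel measure on $X$, $0<p<\infty$, and let $\Gamma^*\subset\Gamma^\mu$ be a family of paths closed under taking non-trivial subpaths such that any two points of $X$ are joined by a path in $\Gamma^*$. If $f,g\in\tilde N^{1,p}$ and $f=g$ $m$-almost everywhere, then $\|f-g\|_{N^{1,p}}=0$.
   Context: A path is a continuous map $\gamma:[a,b]\to X$; a subpath is a restriction to a subinterval, trivial if that interval is a point; $\mathrm{Im}(\gamma)=\gamma([a,b])$. $\mu$ non-atomic: $\mu(\{x\})=0$ for all $x$. $\Gamma^\mu$ is the set of all non-trivial injective paths $\gamma$ with $0<\mu(\mathrm{Im}(\tilde\gamma))<\infty$ for every non-trivial subpath $\tilde\gamma$. For Borel $g\ge0$, $\int_\gamma g:=\int_{\mathrm{Im}(\gamma)}g\,d\mu$. For $\Gamma\subset\Gamma^*$, $\mathrm{Mod}_p(\Gamma)=\inf\int_Xg^p\,dm$ over Borel $g\ge0$ with $\int_\gamma g\ge1$ for all $\gamma\in\Gamma$. A Borel $\rho\ge0$ is a $p$-weak upper gradient of $f$ if $|f(x)-f(y)|\le\int_\gamma\rho$ for all $\gamma\in\Gamma^*$ outside a family of $p$-modulus zero, $x,y$ being the endpoints of $\gamma$. $\tilde N^{1,p}$ is the set of $f\in L^p(m)$ having a $p$-weak upper gradient in $L^p(m)$, and $\|f\|_{N^{1,p}}=\|f\|_{L^p(m)}+\inf_\rho\|\rho\|_{L^p(m)}$, the infimum over all $p$-weak upper gradients $\rho$ of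 $f$. *)

From HB Require Import structures.
From mathcomp Require Import all_boot all_order all_algebra.
From mathcomp Require Import all_classical all_reals all_analysis.
From mathcomp Require Import measurable_realfun.
Set Implicit Arguments. Unset Strict Implicit. Unset Printing Implicit Defensive.
Import Order.TTheory GRing.Theory Num.Theory.
Import numFieldNormedType.Exports.
Local Open Scope classical_set_scope.
Local Open Scope ring_scope.

Section Defs.
Context {R : realType}.

Definition is_metric {X : Type} (dist : X -> X -> R) : Prop :=
  (forall x y, 0 <= dist x y) /\
  (forall x y, dist x y = 0 <-> x = y) /\
  (forall x y, dist x y = dist y x) /\
  (forall x y z, dist x z <= dist x y + dist y z).

Definition metric_open {X : Type} (dist : X -> X -> R) : set (set X) :=
  [set A | forall x, A x -> exists r : R, 0 < r /\ [set y | dist x y < r] `<=` A].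

(* a (candidate) path: a map R -> X considered on the interval [pa, pb] *)
Record mpath (X : Type) := Path { pa : R; pb : R; pf : R -> X }.

Definition is_path {X : Type} (dist : X -> X -> R) (g : mpath X) : Prop :=
  pa g <= pb g /\
  forall t, t \in `[pa g, pb g] -> forall e : R, 0 < e ->
    exists2 delta : R, 0 < delta &
      forall s, s \in `[pa g, pb g] -> `|s - t| < delta ->
        dist (pf g t) (pf g s) < e.

Definition nontrivial {X : Type} (g : mpath X) : Prop := pa g < pb g.

Definition Im {X : Type} (g : mpath X) : set X := pf g @` `[pa g, pb g].

Definition subpath {X : Type} (h g : mpath X) : Prop :=
  pa g <= pa h /\ pa h <= pb h /\ pb h <= pb g /\
  {in `[pa h, pb h], pf h =1 pf g}.

Definition injective_path {X : Type} (g : mpath X) : Prop :=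
  {in `[pa g, pb g] &, injective (pf g)}.

Local Open Scope ereal_scope.

Definition Gamma_mu {d} {X : measurableType d} (dist : X -> X -> R)
  (mu : {measure set X -> \bar R}) : set (mpath X) :=
  [set g | is_path dist g /\ nontrivial g /\ injective_path g /\
     forall h, subpath h g -> nontrivial h -> 0 < mu (Im h) < +oo].

Definition line_int {d} {X : measurableType d}
  (mu : {measure set X -> \bar R}) (g : X -> \bar R) (gam : mpath X) : \bar R :=
  \int[mu]_(x in Im gam) g x.

Definition admissible {d} {X : measurableType d}
  (mu : {measure set X -> \bar R}) (G : set (mpath X)) (g : X -> \bar R) : Prop :=
  measurable_fun [set: X] g /\ (forall x, 0 <= g x) /\
  forall gam, G gam -> 1 <= line_int mu g gam.

Definition Modp {d} {X : measurableType d} (p : R)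
  (mu m : {measure set X -> \bar R}) (G : set (mpath X)) : \bar R :=
  ereal_inf [set \int[m]_x (poweR (g x) p) | g in admissible mu G].

Definition pwug {d} {X : measurableType d} (p : R)
  (mu m : {measure set X -> \bar R}) (Gstar : set (mpath X))
  (f : X -> R) (rho : X -> \bar R) : Prop :=
  measurable_fun [set: X] rho /\ (forall x, 0 <= rho x) /\
  exists G0 : set (mpath X), G0 `<=` Gstar /\ Modp p mu m G0 = 0 /\
    forall gam, Gstar gam -> ~ G0 gam ->
      (`| f (pf gam (pa gam)) - f (pf gam (pb gam)) |)%:E <= line_int mu rho gam.

Definition in_Lp {d} {X : measurableType d} (p : R)
  (m : {measure set X -> \bar R}) (f : X -> R) : Prop :=
  measurable_fun [set: X] f /\ \int[m]_x ((`| f x | `^ p)%R)%:E < +oo.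

Definition in_Lp_e {d} {X : measurableType d} (p : R)
  (m : {measure set X -> \bar R}) (rho : X -> \bar R) : Prop :=
  measurable_fun [set: X] rho /\ \int[m]_x poweR `| rho x | p < +oo.

Definition Ntilde {d} {X : measurableType d} (p : R)
  (mu m : {measure set X -> \bar R}) (Gstar : set (mpath X)) (f : X -> R) : Prop :=
  in_Lp p m f /\ exists rho, pwug p mu m Gstar f rho /\ in_Lp_e p m rho.

Definition N1p_norm {d} {X : measurableType d} (p : R)
  (mu m : {measure set X -> \bar R}) (Gstar : set (mpath X)) (f : X -> R) : \bar R :=
  Lnorm m p%:E (EFin \o f) +
  ereal_inf [set Lnorm m p%:E rho | rho in pwug p mu m Gstar f].

End Defs.

(* Since [f = g] off an [m]-null set [N], the [L^p(m)] parts of the norm of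
   [f - g] and of its candidate upper gradient [infty_on N] (equal to [+oo] on
   [N] and to [0] elsewhere) vanish; it remains to see that [infty_on N] is a
   p-weak upper gradient of [f - g].  Along a path [gam] where the upper gradient
   inequality fails, the line integral of [infty_on N] is finite, so [N] meets the
   image of [gam] in a [mu]-null set; as every nontrivial subpath has image of
   positive [mu]-measure, points where [f = g] come arbitrarily close to every
   point of [gam].  Unless a subpath of [gam] is exceptional for [f] or [g], or
   their upper gradients [rF], [rG] have infinite line integral along [gam], the
   upper gradient inequalities over shrinking arcs (whose line integrals vanish
   because [mu] has no atoms) then give [f = g] all along [gam], in particular at
   its ends, a contradiction.  The exceptional families of [f] and [g] have
   p-modulus zero, and so do the paths along which [rF] or [rG] has infinite line
   integral, since [c rF] and [c rG] are admissible for them for every [c > 0]. *)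

From Pilot Require Import Defs.
From HB Require Import structures.
From mathcomp Require Import all_boot all_order all_algebra.
From mathcomp Require Import all_classical all_reals all_analysis.
From mathcomp Require Import measurable_realfun.
From mathcomp Require Import ring lra.
Import Order.TTheory GRing.Theory Num.Theory.
Import numFieldNormedType.Exports.
Local Open Scope classical_set_scope.
Local Open Scope ring_scope.

Section MeasureFacts.
Context {R : realType} {d : measure_display} {X : measurableType d}.
Local Open Scope ereal_scope.

Definition infty_on (N : set X) : X -> \bar R :=
  fun x => if x \in N then +oo else 0.

Lemma infty_on_ge0 (N : set X) x : 0 <= infty_on N x.
Proof. by rewrite /infty_on; case: ifP. Qed.

Lemma measurable_infty_on {N : set X} : measurable N ->
  measurable_fun setT (infty_on N).
Proof.
move=> mN; apply: measurable_fun_ifT => //.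
apply: (measurable_fun_bool true); rewrite setTI.
rewrite (_ : _ @^-1` _ = N) //; apply/seteqP; split => x /=.
- by move/set_mem.
- exact: mem_set.
Qed.

Lemma integral_infty_on_lty (mu : {measure set X -> \bar R}) {A N : set X} :
  measurable A -> measurable N ->
  \int[mu]_(x in A) infty_on N x < +oo -> mu (N `&` A) = 0.
Proof.
move=> mA mN fin; apply: contrapT => NA0.
have mNA : measurable (N `&` A) by exact: measurableI.
have : \int[mu]_(x in N `&` A) infty_on N x <= \int[mu]_(x in A) infty_on N x.
  apply: ge0_subset_integral => //.
  - exact: measurable_funTS (measurable_infty_on mN).
  - by move=> x _; exact: infty_on_ge0.
rewrite (eq_integral (cst +oo)); last first.
  by move=> x /set_mem [Nx _]; rewrite /infty_on mem_set.
rewrite integral_cst // gt0_mulye; last by rewrite lt0e measure_ge0 andbT; apply/eqP.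
by rewrite leye_eq => /eqP iA; move: fin; rewrite iA ltxx.
Qed.

Lemma Lnorm_ae_eq0 {m : {measure set X -> \bar R}} {p : R} {h : X -> \bar R} :
  p != 0%R -> measurable_fun setT h -> {ae m, forall x, h x = 0} ->
  Lnorm m p%:E h = 0.
Proof.
move=> p0 mh h0; rewrite unlock /= (ae_eq_integral (cst 0)) //.
- by rewrite integral0 poweR0r // invr_neq0.
- apply: measurableT_comp (measurable_poweR p) _.
  exact: measurableT_comp (@abse_measurable _ _) mh.
- by apply: filterS h0 => x /= -> _; rewrite abse0 poweR0r.
Qed.

Lemma poweR_maxe_le (a b : \bar R) (p : R) : 0 <= a -> 0 <= b ->
  poweR (maxe a b) p <= poweR a p + poweR b p.
Proof.
move=> a0 b0; case: (leP a b) => _.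
- by rewrite leeDr // poweR_ge0.
- by rewrite leeDl // poweR_ge0.
Qed.

Lemma integral_poweR_maxe_le {m : {measure set X -> \bar R}} {p : R}
    {a b : X -> \bar R} :
  measurable_fun setT a -> measurable_fun setT b ->
  (forall x, 0 <= a x) -> (forall x, 0 <= b x) ->
  \int[m]_x poweR (maxe (a x) (b x)) p <=
  \int[m]_x poweR (a x) p + \int[m]_x poweR (b x) p.
Proof.
move=> ma mb a0 b0.
have mpow (c : X -> \bar R) :
    measurable_fun setT c -> measurable_fun setT (fun x => poweR (c x) p).
  by move=> mc; exact: measurableT_comp (measurable_poweR p) mc.
rewrite -ge0_integralD //; last 4 first.
- by move=> x _; exact: poweR_ge0.
- exact: mpow.
- by move=> x _; exact: poweR_ge0.
- exact: mpow.
apply: ge0_le_integral => //.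
- by move=> x _; exact: poweR_ge0.
- exact: mpow _ (measurable_maxe ma mb).
- exact: emeasurable_funD (mpow _ ma) (mpow _ mb).
- by move=> x _; exact: poweR_maxe_le.
Qed.

(* Scaling by [c = (e / (K + 1)) ^ (1 / p)], where [K] is the finite p-energy
   of [rho], brings that energy below [e]. *)
Lemma integral_poweR_scale_le {m : {measure set X -> \bar R}}
    {rho : X -> \bar R} {p e : R} :
  (0 < p)%R -> (0 < e)%R -> measurable_fun setT rho -> (forall x, 0 <= rho x) ->
  \int[m]_x poweR (rho x) p < +oo ->
  exists2 c : R, (0 < c)%R & \int[m]_x poweR (c%:E * rho x) p <= e%:E.
Proof.
move=> p0 e0 mrho rho0 fin.
have I0 : 0 <= \int[m]_x poweR (rho x) p.
  by apply: integral_ge0 => x _; exact: poweR_ge0.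
have finI : \int[m]_x poweR (rho x) p \is a fin_num by rewrite ge0_fin_numE.
set K := fine (\int[m]_x poweR (rho x) p).
have K0 : (0 <= K)%R by rewrite /K fine_ge0.
have q0 : (0 < e / (K + 1))%R by rewrite divr_gt0 //; lra.
exists ((e / (K + 1)) `^ p^-1)%R; first exact: powR_gt0.
under eq_integral do rewrite poweRM // ?lee_fin ?powR_ge0 // poweR_EFin.
rewrite ge0_integralZl_EFin //; last 3 first.
- by move=> x _; exact: poweR_ge0.
- exact: measurableT_comp (measurable_poweR _) mrho.
- exact: powR_ge0.
rewrite -powRrM mulVf ?gt_eqF // (powRr1 (ltW q0)) -(fineK finI) -/K -EFinM lee_fin.
have hq : (e / (K + 1) * (K + 1) = e)%R by rewrite divfK // gt_eqF //; lra.
move: q0 hq; move: (e / (K + 1))%R => q q0 hq; nra.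
Qed.

Lemma Modp_eq0P (p : R) (mu m : {measure set X -> \bar R}) (G : set (@mpath R X)) :
  Modp p mu m G = 0 <-> forall e : R, (0 < e)%R ->
    exists2 h, admissible mu G h & \int[m]_x poweR (h x) p <= e%:E.
Proof.
split=> [G0 e e0|small].
  have : Modp p mu m G < e%:E by rewrite G0 lte_fin.
  by move=> /ereal_inf_lt [_ [h ah <-] /ltW]; exists h.
apply/eqP; rewrite eq_le; apply/andP; split.
- apply/lee_addgt0Pr => e e0; rewrite add0e.
  have [h ah hle] := small e e0.
  by apply: le_trans hle; apply: ereal_inf_lbound; exists h.
- apply: le_ereal_inf_tmp => _ [h _ <-]; apply: integral_ge0 => x _.
  exact: poweR_ge0.
Qed.

End MeasureFacts.

Lemma approach_point {R : realType} {a b t0 : R} : a < b -> t0 \in `[a, b] ->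
  exists s : nat -> R,
    [/\ forall n, s n \in `[a, b], forall n, s n != t0 & s n @[n --> \oo] --> t0].
Proof.
rewrite in_itv /= => ab /andP[at0 t0b].
pose e := if t0 < b then b else a.
have [ae eb et0] : [/\ a <= e, e <= b & e != t0].
  rewrite /e; case: ifPn => [t0b'|]; first by rewrite ltW // lexx gt_eqF.
  by rewrite -leNgt => bt0; rewrite lexx ltW // lt_eqF // (lt_le_trans ab bt0).
exists (fun n => t0 + (e - t0) * harmonic n); split.
- move=> n; have h0 : 0 < harmonic n :> R := harmonic_gt0 n.
  have h1 : 0 <= 1 - harmonic n :> R by rewrite subr_ge0 /= invf_le1 // ler1n.
  move: (harmonic n) h0 h1 => h h0 h1.
  have ta : 0 <= t0 - a by rewrite subr_ge0.
  have bt : 0 <= b - t0 by rewrite subr_ge0.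
  have ea : 0 <= e - a by rewrite subr_ge0.
  have be : 0 <= b - e by rewrite subr_ge0.
  have := mulr_ge0 ta h1; have := mulr_ge0 bt h1.
  have := mulr_ge0 ea (ltW h0); have := mulr_ge0 be (ltW h0).
  rewrite in_itv /= => *; apply/andP; split; nra.
- move=> n; rewrite -subr_eq0 addrAC subrr add0r mulf_neq0 ?subr_eq0 //.
  exact: lt0r_neq0 (harmonic_gt0 n).
- rewrite -[X in _ --> X]addr0 -(mulr0 (e - t0)).
  exact: cvgD (cvg_cst t0) (cvgM (cvg_cst (e - t0)) (@cvg_harmonic R)).
Qed.

Section MetricPaths.
Context {R : realType} {d : measure_display} {X : measurableType d}
  {dist : X -> X -> R}.
Hypothesis dist_metric : is_metric dist.
Hypothesis measurable_metric_open : forall A, metric_open dist A -> measurable A.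

Lemma dist_ge0 x y : 0 <= dist x y. Proof. by case: dist_metric. Qed.

Lemma dist_sym x y : dist x y = dist y x.
Proof. by case: dist_metric => _ [_ []]. Qed.

Lemma dist_triangle x y z : dist x z <= dist x y + dist y z.
Proof. by case: dist_metric => _ [_ [_]]. Qed.

Lemma dist_gt0 {x y : X} : x <> y -> 0 < dist x y.
Proof.
have [_ [dist_eq0 _]] := dist_metric.
move=> xy; rewrite lt0r dist_ge0 andbT; apply/eqP => dxy0.
by apply: xy; apply/dist_eq0.
Qed.

Lemma measurable_set1 (x : X) : measurable [set x].
Proof.
rewrite -[[set x]]setCK; apply: measurableC.
apply: measurable_metric_open => z zx.
exists (dist z x); split; first exact: dist_gt0.
by move=> y /= + yx; rewrite yx ltxx.
Qed.

(* The image of a path is closed: a point off it is at positive distance, the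
   minimum of the continuous map [t |-> dist z (pf g t)] on [[pa g, pb g]]. *)
Lemma measurable_Im {g : @mpath R X} : is_path dist g -> measurable (Defs.Im g).
Proof.
move=> [ab cg]; rewrite -[Defs.Im g]setCK.
apply: measurableC; apply: measurable_metric_open => z zNg.
pose phi t := dist z (pf g t).
have cphi : {within `[pa g, pb g], continuous phi}.
  apply/subspace_continuousP => t gt; apply/cvgrPdist_lt => e e0.
  have [delta d0 hd] := cg t gt e e0.
  apply/nbhs_ballP; exists delta => //= s.
  rewrite -ball_normE /ball_ /= => ts gs.
  have := hd s gs; rewrite distrC => /(_ ts).
  have := dist_triangle z (pf g t) (pf g s).
  have := dist_triangle z (pf g s) (pf g t).
  rewrite (dist_sym (pf g s)) /phi => h1 h2 h3.
  by rewrite /from_subspace /= ltr_norml; apply/andP; split; lra.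
have [c gc cmin] := EVT_min ab cphi.
have phic0 : 0 < phi c by apply: dist_gt0 => zc; apply: zNg; exists c.
exists (phi c); split => // y /= zy [t gt ty].
by have := cmin t gt; rewrite /phi ty leNgt zy.
Qed.

Lemma mem_itv_subpath {h g : @mpath R X} {r : R} : subpath h g ->
  r \in `[pa h, pb h] -> r \in `[pa g, pb g].
Proof.
move=> [gh [_ [hg _]]]; rewrite !in_itv /= => /andP[hr rh].
by rewrite (le_trans gh hr) (le_trans rh hg).
Qed.

Lemma Im_subpath {h g : @mpath R X} : subpath h g -> Defs.Im h `<=` Defs.Im g.
Proof.
move=> hg y [r hr <-]; exists r; first exact: mem_itv_subpath hr.
by case: hg => _ [_ [_ ->]].
Qed.

Lemma is_path_subpath {h g : @mpath R X} :
  is_path dist g -> subpath h g -> is_path dist h.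
Proof.
move=> [_ cg] hg; split; first by case: hg => _ [].
move=> t ht e e0; have [_ [_ [_ hgeq]]] := hg.
have [delta d0 hd] := cg t (mem_itv_subpath hg ht) e e0.
exists delta => // s hs ts.
by rewrite !hgeq //; apply: hd => //; exact: mem_itv_subpath hs.
Qed.

Definition path_arc (g : @mpath R X) (u v : R) : @mpath R X :=
  Path (Num.min u v) (Num.max u v) (pf g).

Lemma mem_path_arcl (u v : R) : u \in `[Num.min u v, Num.max u v].
Proof. by rewrite in_itv /= ge_min le_max lexx. Qed.

Lemma subpath_path_arc {g : @mpath R X} {u v : R} : u \in `[pa g, pb g] ->
  v \in `[pa g, pb g] -> subpath (path_arc g u v) g.
Proof.
rewrite !in_itv /= => /andP[gu ug] /andP[gv vg].
rewrite /subpath /= le_min gu gv ge_max ug vg ge_min le_max lexx.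
by split.
Qed.

Lemma nontrivial_path_arc (g : @mpath R X) (u v : R) :
  u != v -> nontrivial (path_arc g u v).
Proof.
rewrite /nontrivial /= => uv.
by case: (ltgtP u v) uv => // uv _; rewrite ?minEle ?maxEle ?ltW ?uv // leNgt uv.
Qed.

Lemma path_arc_ends (F : X -> R) (g : @mpath R X) (u v : R) :
  let h := path_arc g u v in
  `|F (pf h (pa h)) - F (pf h (pb h))| = `|F (pf g u) - F (pf g v)|.
Proof. by rewrite /= minEle maxEle; case: ifP => // _; rewrite distrC. Qed.

Context {mu : {measure set X -> \bar R}}.
Hypothesis mu_set1 : forall x : X, mu [set x] = 0%E.
Local Open Scope ereal_scope.

Lemma line_int_ge0 {g : @mpath R X} {rho : X -> \bar R} :
  (forall x, 0 <= rho x) -> 0 <= line_int mu rho g.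
Proof. by move=> rho0; apply: integral_ge0 => x _. Qed.

Lemma ge0_le_line_int {g : @mpath R X} {k1 k2 : X -> \bar R} :
  is_path dist g -> measurable_fun setT k1 -> measurable_fun setT k2 ->
  (forall x, 0 <= k1 x) -> (forall x, k1 x <= k2 x) ->
  line_int mu k1 g <= line_int mu k2 g.
Proof.
move=> pg mk1 mk2 k10 k12; apply: ge0_le_integral => //.
- exact: measurable_Im pg.
- exact: measurable_funTS.
- exact: measurable_funTS.
Qed.

Lemma ge0_line_int_subpath {h g : @mpath R X} {k : X -> \bar R} :
  is_path dist g -> subpath h g -> measurable_fun setT k -> (forall x, 0 <= k x) ->
  line_int mu k h <= line_int mu k g.
Proof.
move=> pg hg mk k0; apply: ge0_subset_integral => //.
- exact: measurable_Im (is_path_subpath pg hg).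
- exact: measurable_Im pg.
- exact: measurable_funTS.
- exact: Im_subpath.
Qed.

Lemma line_int_scale_pinfty {g : @mpath R X} {k : X -> \bar R} {c : R} :
  is_path dist g -> measurable_fun setT k -> (forall x, 0 <= k x) -> (0 < c)%R ->
  line_int mu k g = +oo -> line_int mu (fun x => c%:E * k x) g = +oo.
Proof.
move=> pg mk k0 c0 kg; rewrite /line_int ge0_integralZl_EFin //; last 3 first.
- exact: measurable_Im pg.
- exact: measurable_funTS.
- exact: ltW.
by rewrite -/(line_int mu k g) kg gt0_muley ?lte_fin.
Qed.

Definition upper_gradient_along (F : X -> R) (rho : X -> \bar R) (g : @mpath R X) :=
  forall h, subpath h g -> nontrivial h ->
    `|F (pf h (pa h)) - F (pf h (pb h))|%:E <= line_int mu rho h.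

Section AlongPath.
Context {g : @mpath R X}.
Hypothesis path_g : is_path dist g.

Lemma path_arc_shrinks {t0 : R} {s : nat -> R} {z : X} :
  t0 \in `[pa g, pb g] -> (forall n, s n \in `[pa g, pb g]) ->
  s n @[n --> \oo] --> t0 -> z <> pf g t0 ->
  \forall n \near \oo, ~ Defs.Im (path_arc g t0 (s n)) z.
Proof.
move=> gt0 gs st0 zt0; have t0z : pf g t0 <> z by move/esym/zt0.
have [delta d0 near_t0] := path_g.2 t0 gt0 _ (dist_gt0 t0z).
have /cvgrPdist_lt /(_ delta d0) := st0.
apply: filterS => n t0sn [r tr rz].
have gr : r \in `[pa g, pb g] := mem_itv_subpath (subpath_path_arc gt0 (gs n)) tr.
suff rt0 : (`|r - t0| < delta)%R by have := near_t0 r gr rt0; rewrite rz ltxx.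
move: tr t0sn; rewrite /= in_itv /= !ltr_norml.
by case: (leP t0 (s n)) => _ /andP[? ?] /andP[? ?]; apply/andP; split; lra.
Qed.

Lemma line_int_path_arc_cvg0 {rho : X -> \bar R} {t0 : R} {s : nat -> R} :
  t0 \in `[pa g, pb g] -> (forall n, s n \in `[pa g, pb g]) ->
  s n @[n --> \oo] --> t0 ->
  measurable_fun setT rho -> (forall x, 0 <= rho x) -> line_int mu rho g < +oo ->
  line_int mu rho (path_arc g t0 (s n)) @[n --> \oo] --> 0.
Proof.
move=> gt0 gs st0 mrho rho0 fin.
pose A n := Defs.Im (path_arc g t0 (s n)).
have Ag n : subpath (path_arc g t0 (s n)) g := subpath_path_arc gt0 (gs n).
have mA n : measurable (A n) := measurable_Im (is_path_subpath path_g (Ag n)).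
have mg := measurable_Im path_g.
have -> : (fun n => line_int mu rho (path_arc g t0 (s n))) =
    (fun n => \int[mu]_(x in Defs.Im g) (rho \_ (A n)) x).
  by apply: funext => n; rewrite -integral_mkcondr setIidr //; exact: Im_subpath.
have mrhoA n : measurable_fun (Defs.Im g) (rho \_ (A n)).
  apply: measurable_funTS; apply/(measurable_restrictT _ (mA n)).
  exact: measurable_funTS.
have irho : mu.-integrable (Defs.Im g) rho.
  apply/integrableP; split; first exact: measurable_funTS.
  by under eq_integral => x _ do rewrite gee0_abs //.
(* Pointwise convergence fails only at [pf g t0], a [mu]-null point. *)
have rhoA_cvg0 : {ae mu, forall x, Defs.Im g x ->
    (fun n => (rho \_ (A n)) x) @ \oo --> (cst 0) x}.
  exists [set pf g t0]; split; [exact: measurable_set1 | exact: mu_set1 |].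
  move=> z /= hz; apply: contra_notP hz => zt0 _.
  apply: cvg_near_cst; apply: filterS (path_arc_shrinks gt0 gs st0 zt0) => n zA.
  by rewrite /patch; case: ifPn => // /set_mem /zA.
have rhoA_le : {ae mu, forall x n, Defs.Im g x -> `|(rho \_ (A n)) x| <= rho x}.
  apply: aeW => z n _; rewrite /patch; case: ifP => _; first by rewrite gee0_abs.
  by rewrite abse0.
have [_ _] := dominated_convergence mg mrhoA (measurable_cst _) rhoA_cvg0 irho rhoA_le.
by rewrite integral0.
Qed.

Hypothesis Im_subpath_gt0 : forall h, subpath h g -> nontrivial h -> 0 < mu (Defs.Im h).

Lemma exists_path_arc_notin {N : set X} {u v : R} :
  measurable N -> mu (N `&` Defs.Im g) = 0 ->
  u \in `[pa g, pb g] -> v \in `[pa g, pb g] -> u != v ->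
  exists2 t, t \in `[Num.min u v, Num.max u v] & ~ N (pf g t).
Proof.
move=> mN N0 gu gv uv; have ug := subpath_path_arc gu gv.
apply: contrapT => allN.
have arcN : Defs.Im (path_arc g u v) `<=` N `&` Defs.Im g.
  move=> y uvy; split; last exact: Im_subpath ug _ uvy.
  by case: uvy => t ut <-; apply: contrapT => Nt; apply: allN; exists t.
have arc_le := le_measure mu (mem_set (measurable_Im (is_path_subpath path_g ug)))
  (mem_set (measurableI _ _ mN (measurable_Im path_g))) arcN.
have N0le : mu (N `&` Defs.Im g) <= 0 by rewrite N0.
have := lt_le_trans (Im_subpath_gt0 _ ug (nontrivial_path_arc g u v uv))
  (le_trans arc_le N0le).
by rewrite ltxx.
Qed.

Lemma ends_le_line_int_path_arc {F : X -> R} {rho : X -> \bar R} {t0 t s : R} :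
  upper_gradient_along F rho g -> measurable_fun setT rho -> (forall x, 0 <= rho x) ->
  t0 \in `[pa g, pb g] -> s \in `[pa g, pb g] ->
  t \in `[Num.min t0 s, Num.max t0 s] -> t0 != t ->
  `|F (pf g t0) - F (pf g t)|%:E <= line_int mu rho (path_arc g t0 s).
Proof.
move=> Frho mrho rho0 gt0 gs ts t0t.
have sg := subpath_path_arc gt0 gs.
have tsub : subpath (path_arc g t0 t) (path_arc g t0 s) :=
  @subpath_path_arc (path_arc g t0 s) _ _ (mem_path_arcl t0 s) ts.
rewrite -(path_arc_ends F g t0 t).
have tg := subpath_path_arc gt0 (mem_itv_subpath sg ts).
apply: le_trans (Frho _ tg (nontrivial_path_arc _ _ _ t0t)) _.
exact: ge0_line_int_subpath (is_path_subpath path_g sg) tsub mrho rho0.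
Qed.

Lemma eq_along_path {F G : X -> R} {rF rG : X -> \bar R} {N : set X} {t0 : R} :
  nontrivial g -> measurable N -> mu (N `&` Defs.Im g) = 0 ->
  (forall x, ~ N x -> F x = G x) ->
  measurable_fun setT rF -> measurable_fun setT rG ->
  (forall x, 0 <= rF x) -> (forall x, 0 <= rG x) ->
  line_int mu rF g < +oo -> line_int mu rG g < +oo ->
  upper_gradient_along F rF g -> upper_gradient_along G rG g ->
  t0 \in `[pa g, pb g] -> F (pf g t0) = G (pf g t0).
Proof.
move=> ntg mN N0 FG mrF mrG rF0 rG0 finF finG FrF GrG gt0.
have [s [gs st0 s_cvg]] := approach_point ntg gt0.
have bound n : `|F (pf g t0) - G (pf g t0)|%:E <=
    line_int mu rF (path_arc g t0 (s n)) + line_int mu rG (path_arc g t0 (s n)).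
  have t0s : t0 != s n by rewrite eq_sym.
  have [t ts Nt] := exists_path_arc_notin mN N0 gt0 (gs n) t0s.
  have [t0t|t0t] := eqVneq t0 t.
    have -> : F (pf g t0) = G (pf g t0) by rewrite t0t FG.
    by rewrite subrr normr0 adde_ge0 // line_int_ge0.
  apply: le_trans (leeD (ends_le_line_int_path_arc FrF mrF rF0 gt0 (gs n) ts t0t)
    (ends_le_line_int_path_arc GrG mrG rG0 gt0 (gs n) ts t0t)).
  rewrite -EFinD lee_fin -(FG _ Nt) (distrC (G (pf g t0))).
  exact: ler_distD.
have : `|F (pf g t0) - G (pf g t0)|%:E <= 0 + 0.
  apply: cvge_to_ge (cvgeD (@fin_num_adde_defl R 0 0 isT)
    (line_int_path_arc_cvg0 gt0 gs s_cvg mrF rF0 finF)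
    (line_int_path_arc_cvg0 gt0 gs s_cvg mrG rG0 finG)) _.
  exact: nearW.
by rewrite adde0 lee_fin normr_le0 subr_eq0 => /eqP.
Qed.

End AlongPath.

Section ExceptionalFamily.
Context {m : {measure set X -> \bar R}} {p : R} {Gstar : set (@mpath R X)}.
Hypothesis Gstar_Gamma : Gstar `<=` Gamma_mu dist mu.
Hypothesis Gstar_subpath :
  forall gam h, Gstar gam -> subpath h gam -> nontrivial h -> Gstar h.
Context {f g : X -> R} {rF rG : X -> \bar R} {Gf Gg : set (@mpath R X)}.
Hypotheses (mrF : measurable_fun setT rF) (mrG : measurable_fun setT rG).
Hypotheses (rF0 : forall x, 0 <= rF x) (rG0 : forall x, 0 <= rG x).
Hypothesis f_ug : forall gam, Gstar gam -> ~ Gf gam ->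
  `|f (pf gam (pa gam)) - f (pf gam (pb gam))|%:E <= line_int mu rF gam.
Hypothesis g_ug : forall gam, Gstar gam -> ~ Gg gam ->
  `|g (pf gam (pa gam)) - g (pf gam (pb gam))|%:E <= line_int mu rG gam.
Context {N : set X}.
Hypotheses (mN : measurable N) (fg_off_N : forall x, ~ N x -> f x = g x).

Definition exceptional : set (@mpath R X) :=
  [set gam | Gstar gam /\ ~ (`|(f \- g) (pf gam (pa gam)) - (f \- g) (pf gam (pb gam))|%:E
                            <= line_int mu (infty_on N) gam)].

Lemma exceptional_cases {gam : @mpath R X} : exceptional gam ->
  (exists2 h, subpath h gam /\ nontrivial h & Gf h \/ Gg h) \/
  line_int mu rF gam = +oo \/ line_int mu rG gam = +oo.
Proof.
move=> [Ggam not_ug].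
have [|noGfg] := pselect (exists2 h, subpath h gam /\ nontrivial h & Gf h \/ Gg h).
  by left.
have [rFoo|rFfin] := eqVneq (line_int mu rF gam) +oo; first by right; left.
have [rGoo|rGfin] := eqVneq (line_int mu rG gam) +oo; first by right; right.
have [pgam [ntgam [_ Im_gt0]]] := Gstar_Gamma _ Ggam.
have Im_subpath_gt0 h : subpath h gam -> nontrivial h -> 0 < mu (Defs.Im h).
  by move=> hg nh; case/andP: (Im_gt0 h hg nh).
have Nnull : mu (N `&` Defs.Im gam) = 0.
  apply: (integral_infty_on_lty mu (measurable_Im pgam) mN).
  have /negP : ~ (`|(f \- g) (pf gam (pa gam)) - (f \- g) (pf gam (pb gam))|%:E
                   <= line_int mu (infty_on N) gam) := not_ug.
  by rewrite -ltNge => /lt_trans; apply; exact: ltry.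
have ug_f : upper_gradient_along f rF gam.
  move=> h hg nh; apply: f_ug; first exact: Gstar_subpath hg nh.
  by move=> Gfh; apply: noGfg; exists h => //; left.
have ug_g : upper_gradient_along g rG gam.
  move=> h hg nh; apply: g_ug; first exact: Gstar_subpath hg nh.
  by move=> Ggh; apply: noGfg; exists h => //; right.
have fg_at t : t \in `[pa gam, pb gam] -> f (pf gam t) = g (pf gam t).
  apply: (eq_along_path pgam Im_subpath_gt0) ntgam mN Nnull fg_off_N
    mrF mrG rF0 rG0 _ _ ug_f ug_g; by rewrite ltey.
exfalso; apply: not_ug.
have ab : (pa gam <= pb gam)%R := ltW ntgam.
rewrite /= !fg_at ?in_itv /= ?lexx ?ab // !subrr normr0.
by apply: line_int_ge0; exact: infty_on_ge0.
Qed.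

Lemma admissible_exceptional (hf hg : X -> \bar R) (cF cG : R) :
  admissible mu Gf hf -> admissible mu Gg hg -> (0 < cF)%R -> (0 < cG)%R ->
  admissible mu exceptional
    (fun x => maxe (maxe (hf x) (hg x)) (maxe (cF%:E * rF x) (cG%:E * rG x))).
Proof.
move=> [mhf [hf0 hf1]] [mhg [hg0 hg1]] cF0 cG0.
set H := fun x => _.
have mcF : measurable_fun setT (fun x => cF%:E * rF x) := measurable_funeM _ mrF.
have mcG : measurable_fun setT (fun x => cG%:E * rG x) := measurable_funeM _ mrG.
have cF0' x : 0 <= cF%:E * rF x by rewrite mule_ge0 // lee_fin ltW.
have cG0' x : 0 <= cG%:E * rG x by rewrite mule_ge0 // lee_fin ltW.
have mH : measurable_fun setT H by apply: measurable_maxe; exact: measurable_maxe.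
have H0 x : 0 <= H x by rewrite /H !le_max hf0.
split=> //; split=> // gam Egam; have [pgam _] := Gstar_Gamma _ Egam.1.
have le_H k : measurable_fun setT k -> (forall x, 0 <= k x) ->
    (forall x, k x <= H x) -> line_int mu k gam <= line_int mu H gam.
  by move=> mk k0 kH; exact: ge0_le_line_int pgam mk mH k0 kH.
case: (exceptional_cases Egam) => [[h [hgam nh] [Gfh|Ggh]]|[rFoo|rGoo]].
- apply: le_trans (hf1 _ Gfh) (le_trans (ge0_line_int_subpath pgam hgam mhf hf0) _).
  by apply: le_H => // x; rewrite /H !le_max lexx.
- apply: le_trans (hg1 _ Ggh) (le_trans (ge0_line_int_subpath pgam hgam mhg hg0) _).
  by apply: le_H => // x; rewrite /H !le_max lexx orbT.
- apply: le_trans (le_H _ mcF cF0' _); last by move=> x; rewrite /H !le_max lexx !orbT.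
  by rewrite (line_int_scale_pinfty pgam mrF rF0 cF0 rFoo) leey.
- apply: le_trans (le_H _ mcG cG0' _); last by move=> x; rewrite /H !le_max lexx !orbT.
  by rewrite (line_int_scale_pinfty pgam mrG rG0 cG0 rGoo) leey.
Qed.

Hypothesis p_gt0 : (0 < p)%R.

Lemma Modp_exceptional :
  Modp p mu m Gf = 0 -> Modp p mu m Gg = 0 ->
  \int[m]_x poweR (rF x) p < +oo -> \int[m]_x poweR (rG x) p < +oo ->
  Modp p mu m exceptional = 0.
Proof.
move=> /Modp_eq0P Gf0 /Modp_eq0P Gg0 finF finG; apply/Modp_eq0P => e e0.
have e4 : (0 < e / 4)%R by rewrite divr_gt0.
have [hf ahf hf_le] := Gf0 _ e4.
have [hg ahg hg_le] := Gg0 _ e4.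
have [cF cF0 cF_le] := integral_poweR_scale_le p_gt0 e4 mrF rF0 finF.
have [cG cG0 cG_le] := integral_poweR_scale_le p_gt0 e4 mrG rG0 finG.
exists (fun x => maxe (maxe (hf x) (hg x)) (maxe (cF%:E * rF x) (cG%:E * rG x))).
  exact: admissible_exceptional.
have [mhf [hf0 _]] := ahf; have [mhg [hg0 _]] := ahg.
have mcF : measurable_fun setT (fun x => cF%:E * rF x) := measurable_funeM _ mrF.
have mcG : measurable_fun setT (fun x => cG%:E * rG x) := measurable_funeM _ mrG.
have cF0' x : 0 <= cF%:E * rF x by rewrite mule_ge0 // lee_fin ltW.
have cG0' x : 0 <= cG%:E * rG x by rewrite mule_ge0 // lee_fin ltW.
have mhfg : measurable_fun setT (fun x => maxe (hf x) (hg x)).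
  exact: measurable_maxe.
have mcFG : measurable_fun setT (fun x => maxe (cF%:E * rF x) (cG%:E * rG x)).
  exact: measurable_maxe.
apply: le_trans (integral_poweR_maxe_le mhfg mcFG _ _) _.
- by move=> x; rewrite le_max hf0.
- by move=> x; rewrite le_max cF0'.
apply: le_trans (leeD (integral_poweR_maxe_le mhf mhg hf0 hg0)
  (integral_poweR_maxe_le mcF mcG cF0' cG0')) _.
have -> : e = (e / 4 + e / 4 + (e / 4 + e / 4))%R by field.
by rewrite !EFinD; apply: leeD; apply: leeD.
Qed.

Lemma pwug_infty_on :
  Modp p mu m Gf = 0 -> Modp p mu m Gg = 0 ->
  \int[m]_x poweR (rF x) p < +oo -> \int[m]_x poweR (rG x) p < +oo ->
  pwug p mu m Gstar (f \- g)%R (infty_on N).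
Proof.
move=> Gf0 Gg0 finF finG.
split; first exact: measurable_infty_on mN.
split; first exact: infty_on_ge0.
exists exceptional; split; first by move=> gam [].
split; first exact: Modp_exceptional.
by move=> gam Ggam not_exc; apply: contrapT => not_ug; apply: not_exc.
Qed.

End ExceptionalFamily.

End MetricPaths.

Theorem corollary4p1 (R : realType) (d : measure_display) (X : measurableType d)
  (dist : X -> X -> R)
  (mu m : {measure set X -> \bar R}) (p : R) (Gstar : set (mpath X))
  (f g : X -> R) :
  is_metric dist ->
  (@measurable d X = <<s metric_open dist >>) ->
  (forall x : X, mu [set x] = 0%E) ->
  0 < p ->
  Gstar `<=` Gamma_mu dist mu ->
  (forall gam h, Gstar gam -> subpath h gam -> nontrivial h -> Gstar h) ->
  (forall x y : X, x <> y -> exists2 gam, Gstar gam &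
      (pf gam (pa gam) = x /\ pf gam (pb gam) = y) \/
      (pf gam (pa gam) = y /\ pf gam (pb gam) = x)) ->
  Ntilde p mu m Gstar f -> Ntilde p mu m Gstar g ->
  {ae m, forall x, f x = g x} ->
  N1p_norm p mu m Gstar (f \- g) = 0%E.
Proof.
move=> dist_metric measurableE mu_set1 p_gt0 Gstar_Gamma Gstar_subpath _
  [[mf _] [rF [[mrF [rF0 [Gf [_ [Gf0 f_ug]]]]] [_ finF]]]]
  [[mg _] [rG [[mrG [rG0 [Gg [_ [Gg0 g_ug]]]]] [_ finG]]]] [N [mN mN0 fgN]].
have open_measurable A : metric_open dist A -> measurable A.
  by move=> oA; rewrite measurableE; exact: sub_sigma_algebra.
have fg_off_N x : ~ N x -> f x = g x by move=> Nx; apply: contrapT => /fgN.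
have energy (rho : X -> \bar R) : (forall x, 0 <= rho x)%E ->
    (\int[m]_x poweR `|rho x| p < +oo -> \int[m]_x poweR (rho x) p < +oo)%E.
  by move=> rho0; under eq_integral => x _ do rewrite gee0_abs //.
have p_neq0 : p != 0 by rewrite gt_eqF.
rewrite /N1p_norm (Lnorm_ae_eq0 p_neq0); last 2 first.
- by apply/measurable_EFinP; apply: measurable_funB.
- exists N; split => // x /= fgx; apply: contrapT => Nx; apply: fgx.
  by rewrite fg_off_N // subrr.
rewrite add0e; apply/eqP; rewrite eq_le; apply/andP; split.
- apply: ereal_inf_lbound; exists (infty_on N).
    apply: (pwug_infty_on dist_metric open_measurable mu_set1 Gstar_Gamma
      Gstar_subpath mrF mrG rF0 rG0 f_ug g_ug mN fg_off_N p_gt0 Gf0 Gg0);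
      exact: energy.
  apply: Lnorm_ae_eq0 p_neq0 (measurable_infty_on mN) _.
  exists N; split => // x /= Nx; apply: contrapT => nNx; apply: Nx.
  by rewrite /infty_on memNset.
- by apply: le_ereal_inf_tmp => _ [rho _ <-]; exact: Lnorm_ge0.
Qed.
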